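(* Let $Y$ be a solid vector space, $(X,d)$ a cone metric space over $Y$, $D\subseteq X$ and $T\colon D\to X$. Suppose that for some $x_0\in D$ the Picard iteration $x_{n+1}=Tx_n$ ($n\ge0$) is well defined (i.e. $x_n\in D$ for all $n$) and converges to a point $\xi\in D$. Then each of the following conditions implies that $T\xi=\xi$: (F1) $T$ is continuous at $\xi$; (F2) $T$ has a closed graph, i.e. $\{(x,Tx):x\in D\}$ is closed in $D\times X$; (F3) for some semimonotone norm $\|\cdot\|$ on $Y$, the function $G(x)=\|d(x,Tx)\|$ is lower semicontinuous at $\xi$; (F4) there are real $\alpha,\beta\ge0$ with $d(\xi,T\xi)\preceq\alpha\,d(x,\xi)+\beta\,d(Tx,\xi)$ for each $x\in D$.
   Context: Vector space with convergence: a real vector space $Y$ with a relation $\to$ between sequences in $Y$ and points of $Y$ (uniqueness of limits not assumed) such that (C1) $x_n\to x$, $y_n\to y$ imply $x_n+y_n\to x+y$; (C2) $x_n\to x$, $\lambda\in\mathbb R$ imply $\lambda x_n\to\lambda x$; (C3) $\lambda_n\to\lambda$ in $\mathbb R$ imply $\lambda_n x\to\lambda x$. $A\subseteq Y$ is open if $x_n\to x\in A$ implies $x_n\in A$ for all but finitely many $n$; closed if $x_n\to x$, $x_n\in A$ $\forall n$ imply $x\in A$; $A^\circ$ is the union of all open subsets of $A$. A cone is a nonempty closed $K$ with $\lambda K\subseteq K$ ($\lambda\ge0$), $K+K\subseteq K$, $K\cap(-K)=\{0\}$; solid if $K\ne\{0\}$, $K^\circ\ne\emptyset$. A vector ordering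 is a partial order $\preceq$ with (V1) $x\preceq y\Rightarrow x+z\preceq y+z$; (V2) $\lambda\ge0$, $x\preceq y\Rightarrow\lambda x\preceq\lambda y$; (V3) $x_n\to x$, $y_n\to y$, $x_n\preceq y_n$ $\forall n\Rightarrow x\preceq y$. Solid vector space: positive cone $K=\{x:x\succeq0\}$ solid, with $x\prec y$ iff $y-x\in K^\circ$. A norm $\|\cdot\|$ on $Y$ is semimonotone if there is $C>0$ with $\|x\|\le C\|y\|$ whenever $0\preceq x\preceq y$. Cone metric space over $Y$: nonempty $X$ with $d\colon X\times X\to Y$, $d(x,y)\succeq0$, $d(x,y)=0$ iff $x=y$, $d(x,y)=d(y,x)$, $d(x,y)\preceq d(x,z)+d(z,y)$. $X$ carries the topology with basis $U(x,r)=\{y:d(y,x)\prec r\}$ ($r\succ0$); $x_n\to x$ iff for every $c\succ0$, $d(x_n,x)\prec c$ for all but finitely many $n$. Continuity and lower semicontinuity refer to this topology (restricted to $D$). *)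

From mathcomp Require Import all_boot all_order all_algebra.
From mathcomp Require Import reals.
Set Implicit Arguments. Unset Strict Implicit. Unset Printing Implicit Defensive.
Import Order.TTheory GRing.Theory Num.Theory.
Local Open Scope ring_scope.

Section VectorSpaceWithConvergence.
Variables (R : realType) (Y : lmodType R).
Variable conv : (nat -> Y) -> Y -> Prop.

Definition real_seq_conv (l : nat -> R) (a : R) : Prop :=
  forall e : R, 0 < e -> exists N : nat, forall n : nat, (N <= n)%N -> `|l n - a| < e.

Definition conv_axioms : Prop :=
  (forall (xs ys : nat -> Y) (x y : Y), conv xs x -> conv ys y ->
       conv (fun n => xs n + ys n) (x + y)) /\
  (forall (xs : nat -> Y) (x : Y) (a : R), conv xs x -> conv (fun n => a *: xs n) (a *: x)) /\
  (forall (l : nat -> R) (a : R) (x : Y), real_seq_conv l a ->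
       conv (fun n => l n *: x) (a *: x)).

Definition vopen (A : Y -> Prop) : Prop :=
  forall (xs : nat -> Y) (x : Y), conv xs x -> A x ->
    exists N : nat, forall n : nat, (N <= n)%N -> A (xs n).

Definition vclosed (A : Y -> Prop) : Prop :=
  forall (xs : nat -> Y) (x : Y), conv xs x -> (forall n, A (xs n)) -> A x.

Definition vinterior (A : Y -> Prop) (x : Y) : Prop :=
  exists U : Y -> Prop, vopen U /\ (forall y, U y -> A y) /\ U x.

Definition is_cone (K : Y -> Prop) : Prop :=
  (exists x, K x) /\ vclosed K /\
  (forall (a : R) (x : Y), 0 <= a -> K x -> K (a *: x)) /\
  (forall x y, K x -> K y -> K (x + y)) /\
  (forall x, K x -> K (- x) -> x = 0).

Definition solid_cone (K : Y -> Prop) : Prop :=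
  is_cone K /\ (exists x, K x /\ x <> 0) /\ (exists x, vinterior K x).

Definition vector_ordering (le : Y -> Y -> Prop) : Prop :=
  (forall x, le x x) /\ (forall x y, le x y -> le y x -> x = y) /\
  (forall x y z, le x y -> le y z -> le x z) /\
  (forall x y z, le x y -> le (x + z) (y + z)) /\
  (forall (a : R) x y, 0 <= a -> le x y -> le (a *: x) (a *: y)) /\
  (forall (xs ys : nat -> Y) (x y : Y), conv xs x -> conv ys y ->
       (forall n, le (xs n) (ys n)) -> le x y).

Definition pos_cone (le : Y -> Y -> Prop) : Y -> Prop := fun x => le 0 x.

Definition solid_space (le : Y -> Y -> Prop) : Prop :=
  vector_ordering le /\ solid_cone (pos_cone le).

Definition vlt (le : Y -> Y -> Prop) (x y : Y) : Prop := vinterior (pos_cone le) (y - x).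

Definition is_norm (N : Y -> R) : Prop :=
  (forall x, 0 <= N x) /\ (forall x, N x = 0 -> x = 0) /\
  (forall (a : R) x, N (a *: x) = `|a| * N x) /\
  (forall x y, N (x + y) <= N x + N y).

Definition semimonotone_norm (le : Y -> Y -> Prop) (N : Y -> R) : Prop :=
  is_norm N /\ exists C : R, 0 < C /\ forall x y, le 0 x -> le x y -> N x <= C * N y.

Section ConeMetric.
Variable le : Y -> Y -> Prop.
Variables (X : Type) (d : X -> X -> Y).

Definition cone_metric : Prop :=
  (forall x y, le 0 (d x y)) /\ (forall x y, d x y = 0 <-> x = y) /\
  (forall x y, d x y = d y x) /\ (forall x y z, le (d x y) (d x z + d z y)).

Definition cball (x : X) (r : Y) (y : X) : Prop := vlt le (d y x) r.

Definition copen (A : X -> Prop) : Prop :=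
  forall a, A a -> exists (x : X) (r : Y),
    vlt le 0 r /\ cball x r a /\ forall y, cball x r y -> A y.

Definition cconv (xs : nat -> X) (x : X) : Prop :=
  forall c : Y, vlt le 0 c -> exists N : nat, forall n : nat, (N <= n)%N -> vlt le (d (xs n) x) c.

Definition open_in (D : X -> Prop) (V : X -> Prop) : Prop :=
  exists O : X -> Prop, copen O /\ forall x, V x <-> (D x /\ O x).

Definition open_in_prod (D : X -> Prop) (P : X * X -> Prop) : Prop :=
  forall p, P p -> D p.1 /\
    exists (U V : X -> Prop), open_in D U /\ copen V /\ U p.1 /\ V p.2 /\
      forall q : X * X, U q.1 -> V q.2 -> P q.

Definition closed_in_prod (D : X -> Prop) (P : X * X -> Prop) : Prop :=
  open_in_prod D (fun p => D p.1 /\ ~ P p).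

Definition continuous_at_in (D : X -> Prop) (T : X -> X) (xi : X) : Prop :=
  forall O : X -> Prop, copen O -> O (T xi) ->
    exists W, open_in D W /\ W xi /\ forall x, W x -> O (T x).

Definition closed_graph (D : X -> Prop) (T : X -> X) : Prop :=
  closed_in_prod D (fun p => D p.1 /\ p.2 = T p.1).

Definition lsc_at_in (D : X -> Prop) (G : X -> R) (xi : X) : Prop :=
  forall t : R, t < G xi -> exists W, open_in D W /\ W xi /\ forall x, W x -> t < G x.

End ConeMetric.
End VectorSpaceWithConvergence.

(* Each condition is played off against the two facts that x_n -> xi and
   x_(n+1) = T x_n -> xi.  Limits are unique because in a solid space a
   vector a >= 0 with a <= k c for every c >> 0 vanishes (take c = c0/(n+1)
   for an interior point c0 and pass to the limit with (V3)).  Continuity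
   sends x_n -> xi to T x_n -> T xi; a closed graph forbids (xi, xi) from
   being a limit of graph points (x_n, T x_n) unless T xi = xi; a semimonotone
   norm makes ||d(x_n, T x_n)|| = ||d(x_n, x_(n+1))|| small, against lower
   semicontinuity at xi; and under (F4) d(xi, T xi) <= (alpha + beta) c for
   every c >> 0. *)
From Stdlib Require Import Classical.
From mathcomp Require Import all_boot all_order all_algebra.
From mathcomp Require Import reals.
From mathcomp Require Import ring lra.
Set Implicit Arguments. Unset Strict Implicit.
Import Order.TTheory GRing.Theory Num.Theory.
Local Open Scope ring_scope.

Section SolidSpace.
Variables (R : realType) (Y : lmodType R) (conv : (nat -> Y) -> Y -> Prop)
  (le : Y -> Y -> Prop).
Hypothesis conv_ax : conv_axioms conv.
Hypothesis solid : solid_space conv le.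

Local Notation interior := (vinterior conv (pos_cone le)).

Lemma vle_trans a b c : le a b -> le b c -> le a c.
Proof. by case: solid => [[_ [_ [H _]]] _]; apply: H. Qed.

Lemma vleD2r a b z : le a b -> le (a + z) (b + z).
Proof. by case: solid => [[_ [_ [_ [H _]]]] _]; apply: H. Qed.

Lemma vleZ k a b : 0 <= k -> le a b -> le (k *: a) (k *: b).
Proof. by case: solid => [[_ [_ [_ [_ [H _]]]]] _]; apply: H. Qed.

Lemma vleD a b c e : le a b -> le c e -> le (a + c) (b + e).
Proof.
move=> le_ab le_ce; apply: (vle_trans (vleD2r c le_ab)).
by rewrite !(addrC b); apply: vleD2r.
Qed.

Lemma conv_cst x : conv (fun _ => x) x.
Proof.
case: conv_ax => [_ [_ C3]].
have := C3 (fun _ => 1) 1 x; rewrite scale1r; apply=> e e_gt0.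
by exists 0%N => n _; rewrite subrr normr0.
Qed.

Lemma vinterior_ge0 x : interior x -> le 0 x.
Proof. by case=> U [_ [UK Ux]]; apply: UK. Qed.

Lemma vltW a b : vlt conv le a b -> le a b.
Proof. by move=> /vinterior_ge0 /(vleD2r a); rewrite add0r subrK. Qed.

Lemma vinteriorZ l x : 0 < l -> interior x -> interior (l *: x).
Proof.
move=> l_gt0 [U [oU [UK Ux]]]; have l_neq0 : l != 0 by rewrite gt_eqF.
exists (fun y => U (l^-1 *: y)); split; [|split].
- case: conv_ax => [_ [C2 _]] ys y ys_y.
  exact: oU (C2 _ _ l^-1 ys_y).
- move=> y /UK /(vleZ (ltW l_gt0)).
  by rewrite scaler0 scalerA mulfV // scale1r.
- by rewrite scalerA mulVf // scale1r.
Qed.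

Lemma vinteriorDl u v : le 0 u -> interior v -> interior (u + v).
Proof.
move=> u_ge0 [U [oU [UK Uv]]].
exists (fun y => U (y - u)); split; [|split].
- case: conv_ax => [C1 _] ys y ys_y.
  exact: oU (C1 _ _ _ _ ys_y (conv_cst (- u))).
- by move=> y /UK /(vleD u_ge0); rewrite add0r (addrC u) subrK.
- by rewrite (addrC u) addrK.
Qed.

Lemma vle_vlt_trans a b c : le a b -> vlt conv le b c -> vlt conv le a c.
Proof.
move=> le_ab lt_bc; rewrite /vlt; have -> : c - a = (b - a) + (c - b).
  by rewrite (addrC (b - a)) addrA subrK.
by apply: vinteriorDl => //; move: (vleD2r (- a) le_ab); rewrite subrr.
Qed.

Lemma real_seq_conv_invS : real_seq_conv (fun n : nat => (n.+1%:R : R)^-1) 0.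
Proof.
move=> e e_gt0; have inve_ge0 : 0 <= e^-1 by rewrite invr_ge0 ltW.
exists (Num.Def.archi_bound e^-1) => n le_bn.
rewrite subr0 ger0_norm ?invr_ge0 ?ler0n //.
rewrite -[e]invrK ltf_pV2 ?posrE ?ltr0Sn ?invr_gt0 //.
apply: (lt_le_trans (archi_boundP inve_ge0)).
by rewrite ler_nat; apply: leq_trans le_bn _.
Qed.

Lemma vle_interior_eq0 k a : 0 <= k -> le 0 a ->
  (forall c, vlt conv le 0 c -> le a (k *: c)) -> a = 0.
Proof.
move=> k_ge0 a_ge0 a_small.
case: solid => [[_ [anti [_ [_ [_ V3]]]]] [_ [_ [c0 c0_int]]]].
case: conv_ax => [_ [C2 C3]].
apply: anti => //.
have -> : (0 : Y) = k *: (0 *: c0) by rewrite scale0r scaler0.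
apply: (V3 _ (fun n => k *: ((n.+1%:R : R)^-1 *: c0)) _ _ (conv_cst a)).
  exact/C2/C3/real_seq_conv_invS.
move=> n; apply: a_small; rewrite /vlt subr0.
by apply: vinteriorZ => //; rewrite invr_gt0 ltr0Sn.
Qed.

Lemma interior_norm_lt (Nm : Y -> R) e : is_norm Nm -> 0 < e ->
  exists c, vlt conv le 0 c /\ Nm c < e.
Proof.
move=> [Nm_ge0 [_ [NmZ _]]] e_gt0.
case: solid => [_ [_ [_ [c0 c0_int]]]].
have den_gt0 : 0 < Nm c0 + 1 by have := Nm_ge0 c0; lra.
pose l := e / (Nm c0 + 1); have l_gt0 : 0 < l by rewrite divr_gt0.
exists (l *: c0); split; first by rewrite /vlt subr0; apply: vinteriorZ.
rewrite NmZ ger0_norm ?ltW // /l mulrAC ltr_pdivrMr //.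
by rewrite ltr_pM2l //; lra.
Qed.

Section ConeMetric.
Variables (X : Type) (d : X -> X -> Y).
Hypothesis metric : cone_metric le d.

Local Notation cconv := (cconv conv le d).
Local Notation copen := (copen conv le d).

Lemma dist_xx x : d x x = 0.
Proof. by case: metric => [_ [dE _]]; apply/dE. Qed.

Lemma dist_triangle x y z : le (d x y) (d x z + d y z).
Proof. by case: metric => [_ [_ [dC dT]]]; rewrite (dC y). Qed.

Lemma cconvS ys y : cconv ys y -> cconv (fun n => ys n.+1) y.
Proof.
move=> ys_y c c_gt0; case: (ys_y c c_gt0) => N ev.
by exists N => n le_Nn; apply/ev/leqW.
Qed.

Lemma cconv_uniq ys a b : cconv ys a -> cconv ys b -> a = b.
Proof.
move=> ys_a ys_b; case: metric => [d_ge0 [dE [dC _]]].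
apply/dE/(@vle_interior_eq0 2) => // c c_gt0.
case: (ys_a c c_gt0) => N1 ev1; case: (ys_b c c_gt0) => N2 ev2.
apply: (vle_trans (dist_triangle a b (ys (N1 + N2)%N))).
rewrite scaler_nat mulr2n (dC a) (dC b).
by apply: vleD; apply/vltW; [apply/ev1/leq_addr | apply/ev2/leq_addl].
Qed.

Lemma cball_copen x c : vlt conv le 0 c -> copen (cball conv le d x c).
Proof. by move=> c_gt0 y xy_c; exists x, c. Qed.

Lemma cball_center x c : vlt conv le 0 c -> cball conv le d x c x.
Proof. by rewrite /cball dist_xx. Qed.

Lemma copen_cconv_ev O ys y : copen O -> O y -> cconv ys y ->
  exists N, forall n, (N <= n)%N -> O (ys n).
Proof.
move=> oO Oy ys_y; case: (oO _ Oy) => z [r [_ [y_zr zr_O]]].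
have rad_gt0 : vlt conv le 0 (r - d y z) by rewrite /vlt subr0.
case: (ys_y _ rad_gt0) => N ev; exists N => n le_Nn; apply: zr_O.
apply: (vle_vlt_trans (dist_triangle _ _ y)); case: metric => [_ [_ [dC _]]].
by move: (ev n le_Nn); rewrite /vlt dC opprD addrA addrAC.
Qed.

Lemma open_in_cconv_ev D W ys y : open_in conv le d D W -> W y ->
  (forall n, D (ys n)) -> cconv ys y -> exists N, forall n, (N <= n)%N -> W (ys n).
Proof.
move=> [O [oO W_DO]] /W_DO [_ Oy] D_ys ys_y.
case: (copen_cconv_ev oO Oy ys_y) => N ev.
by exists N => n le_Nn; apply/W_DO; split; [apply: D_ys | apply: ev].
Qed.

Lemma continuous_at_in_cconv D T ys y : continuous_at_in conv le d D T y ->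
  (forall n, D (ys n)) -> cconv ys y -> cconv (fun n => T (ys n)) (T y).
Proof.
move=> T_cont D_ys ys_y c c_gt0.
case: (T_cont _ (cball_copen (x := T y) c_gt0) (cball_center (T y) c_gt0)).
move=> W [oW [Wy W_ball]].
case: (open_in_cconv_ev oW Wy D_ys ys_y) => N ev.
by exists N => n /ev /W_ball.
Qed.

Lemma cconv_norm_lt (Nm : Y -> R) ys y : semimonotone_norm le Nm ->
  cconv ys y -> forall e, 0 < e -> exists N, forall n, (N <= n)%N -> Nm (d (ys n) y) < e.
Proof.
move=> [Nm_norm [C [C_gt0 Nm_mono]]] ys_y e e_gt0.
case: (interior_norm_lt Nm_norm (divr_gt0 e_gt0 C_gt0)) => c [c_gt0 Nc_lt].
case: (ys_y c c_gt0) => N ev; exists N => n /ev /vltW dist_le.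
case: metric => [d_ge0 _].
apply: (le_lt_trans (Nm_mono _ _ (d_ge0 _ _) dist_le)).
by rewrite mulrC -ltr_pdivlMr.
Qed.

End ConeMetric.
End SolidSpace.

Section PicardIteration.
Variables (R : realType) (Y : lmodType R) (conv : (nat -> Y) -> Y -> Prop)
  (le : Y -> Y -> Prop) (X : Type) (d : X -> X -> Y).
Hypotheses (conv_ax : conv_axioms conv) (solid : solid_space conv le)
  (metric : cone_metric le d).
Variables (D : X -> Prop) (T : X -> X) (xs : nat -> X) (xi : X).
Hypotheses (xsS : forall n, xs n.+1 = T (xs n)) (D_xs : forall n, D (xs n))
  (D_xi : D xi) (xs_xi : cconv conv le d xs xi).

Let Txs_xi : cconv conv le d (fun n => T (xs n)) xi.
Proof. by move=> c /(cconvS xs_xi) [N ev]; exists N => n /ev; rewrite xsS. Qed.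

Lemma fixed_point_of_continuous : continuous_at_in conv le d D T xi -> T xi = xi.
Proof.
move=> T_cont; apply: (cconv_uniq conv_ax solid metric _ Txs_xi).
exact: (continuous_at_in_cconv conv_ax solid metric T_cont D_xs xs_xi).
Qed.

Lemma fixed_point_of_closed_graph : closed_graph conv le d D T -> T xi = xi.
Proof.
move=> T_graph; apply: NNPP => Txi_neq.
have xi_off : D xi /\ ~ (D xi /\ xi = T xi) by split => // -[_ /esym].
case: (T_graph (xi, xi) xi_off) => _ [U [V [oU [oV [Uxi [Vxi UV_off]]]]]].
case: (open_in_cconv_ev conv_ax solid metric oU Uxi D_xs xs_xi) => N1 ev1.
case: (copen_cconv_ev conv_ax solid metric oV Vxi Txs_xi) => N2 ev2.
have [_ not_graph] := UV_off (xs (N1 + N2)%N, T (xs (N1 + N2)%N))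
  (ev1 _ (leq_addr _ _)) (ev2 _ (leq_addl _ _)).
exact: not_graph (conj (D_xs _) erefl).
Qed.

Lemma fixed_point_of_lsc_norm (Nm : Y -> R) : semimonotone_norm le Nm ->
  lsc_at_in conv le d D (fun x => Nm (d x (T x))) xi -> T xi = xi.
Proof.
move=> Nm_semi G_lsc; have [[Nm_ge0 [Nm_eq0 [_ NmD]]] [C [C_gt0 Nm_mono]]] := Nm_semi.
case: metric => [d_ge0 [dE _]]; apply/esym/dE/Nm_eq0/le_anti.
rewrite Nm_ge0 andbT leNgt; apply/negP; set a := Nm _ => a_gt0.
have [|W [oW [Wxi W_G]]] := G_lsc (a / 2); first by rewrite /= -/a; lra.
case: (open_in_cconv_ev conv_ax solid metric oW Wxi D_xs xs_xi) => N1 ev1.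
pose e := a / 2 / (2 * C).
have e_gt0 : 0 < e by rewrite !divr_gt0 ?mulr_gt0.
case: (cconv_norm_lt conv_ax solid metric Nm_semi xs_xi e_gt0) => N2 ev2.
pose n := (N1 + N2)%N.
have step_gt : a / 2 < Nm (d (xs n) (xs n.+1)).
  by rewrite xsS; apply: W_G (ev1 n (leq_addr _ _)).
have step_le : Nm (d (xs n) (xs n.+1)) <= C * (Nm (d (xs n) xi) + Nm (d (xs n.+1) xi)).
  apply: le_trans (Nm_mono _ _ (d_ge0 _ _) (dist_triangle metric _ _ xi)) _.
  by rewrite ler_pM2l.
have step_lt : C * (Nm (d (xs n) xi) + Nm (d (xs n.+1) xi)) < C * (2 * e).
  rewrite ltr_pM2l //.
  by have := ev2 n (leq_addl _ _); have := ev2 n.+1 (leqW (leq_addl _ _)); lra.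
have Ce : C * (2 * e) = a / 2 by rewrite /e; field; rewrite gt_eqF.
lra.
Qed.

Lemma fixed_point_of_dist_bound (alpha beta : R) : 0 <= alpha -> 0 <= beta ->
  (forall x, D x -> le (d xi (T xi)) (alpha *: d x xi + beta *: d (T x) xi)) ->
  T xi = xi.
Proof.
move=> alpha_ge0 beta_ge0 bound; case: metric => [d_ge0 [dE _]].
apply/esym/dE/(@vle_interior_eq0 _ _ _ _ conv_ax solid (alpha + beta)) => //.
  by rewrite addr_ge0.
move=> c /xs_xi [N ev].
apply: (vle_trans solid (bound _ (D_xs N))).
rewrite scalerDl -xsS; apply: (vleD solid); apply: (vleZ solid) => //.
  exact/(vltW solid)/ev.
exact/(vltW solid)/ev/leqnSn.
Qed.

End PicardIteration.

Theorem proposition10p1 (R : realType) (Y : lmodType R)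
  (conv : (nat -> Y) -> Y -> Prop) (le : Y -> Y -> Prop)
  (X : Type) (d : X -> X -> Y) (D : X -> Prop) (T : X -> X)
  (x0 xi : X) (xs : nat -> X) :
  conv_axioms conv -> solid_space conv le -> cone_metric le d ->
  D x0 -> xs 0%N = x0 -> (forall n : nat, xs n.+1 = T (xs n)) ->
  (forall n : nat, D (xs n)) -> D xi -> cconv conv le d xs xi ->
  (* (F1) *)
  (continuous_at_in conv le d D T xi -> T xi = xi) /\
  (* (F2) *)
  (closed_graph conv le d D T -> T xi = xi) /\
  (* (F3) *)
  ((exists N : Y -> R, semimonotone_norm le N /\
      lsc_at_in conv le d D (fun x => N (d x (T x))) xi) -> T xi = xi) /\
  (* (F4) *)
  ((exists alpha beta : R, 0 <= alpha /\ 0 <= beta /\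
      forall x, D x -> le (d xi (T xi)) (alpha *: d x xi + beta *: d (T x) xi)) ->
     T xi = xi).
Proof.
move=> conv_ax solid metric _ _ xsS D_xs D_xi xs_xi.
split; [|split; [|split]].
- exact: (fixed_point_of_continuous conv_ax solid metric xsS D_xs xs_xi).
- exact: (fixed_point_of_closed_graph conv_ax solid metric xsS D_xs D_xi xs_xi).
- move=> [Nm [Nm_semi G_lsc]].
  exact: (fixed_point_of_lsc_norm conv_ax solid metric xsS D_xs xs_xi Nm_semi G_lsc).
- move=> [alpha [beta [alpha_ge0 [beta_ge0 bound]]]].
  exact: (fixed_point_of_dist_bound conv_ax solid metric xsS D_xs xs_xi
    alpha_ge0 beta_ge0 bound).
Qed.
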